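(* Let $q$ and $\lambda\in(0,\infty)$ be as in the context and let $U_1=(P_1,Q_1,R_1)^T$ be the unique solution of the Appell system with $\lim_{x\to\infty}U_1(x,\lambda)=(\sqrt\lambda,0,1/\sqrt\lambda)^T$. Fix $c>0$ and let $\gamma(x)=\int_c^x\frac{dt}{R_1(t,\lambda)}$. Define \[U_2=\begin{pmatrix}P_1\cos2\gamma+(Q_1/R_1)\sin2\gamma-(2/R_1)\cos2\gamma\\ Q_1\cos2\gamma+2\sin2\gamma\\ R_1\cos2\gamma\end{pmatrix},\quad U_3=\begin{pmatrix}P_1\sin2\gamma-(Q_1/R_1)\cos2\gamma-(2/R_1)\sin2\gamma\\ Q_1\sin2\gamma-2\cos2\gamma\\ R_1\sin2\gamma\end{pmatrix}.\] Then every solution $U$ of the Appell system can be written as $U=\beta_1U_1+\beta_2U_2+\beta_3U_3$ for constants $\beta_1,\beta_2,\beta_3$ (in particular $U_2,U_3$ are solutions).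
   Context: $q(x)=\frac{q_0}{x^2}+\frac{q_1}{x}+\sum_{n\ge0}q_{n+2}x^n$ with real coefficients, the series convergent on $(0,\infty)$, $q_0\ge-\tfrac14$, $q_0,q_1$ not both zero; for some $x_0>0$ either $q\in L_1(x_0,\infty)$, or $q'\in L_1(x_0,\infty)$, $q\in AC_{loc}[x_0,\infty)$ and $q\to0$ at $\infty$. Appell system: $(P,Q,R)'=M(P,Q,R)^T$ with $M=\begin{pmatrix}0&\lambda-q&0\\-2&0&2(\lambda-q)\\0&-1&0\end{pmatrix}$; under these hypotheses $U_1$ exists and is unique, and $R_1(x,\lambda)>0$ for all $x>0$, so $\gamma$ is well defined. *)

From Stdlib Require Import Reals Lra.
From Coquelicot Require Import Coquelicot.
Open Scope R_scope.

Definition qfun (a : nat -> R) (x : R) : R :=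
  a 0%nat / x ^ 2 + a 1%nat / x + Series (fun n => a (n + 2)%nat * x ^ n).

Definition q_hyp (a : nat -> R) : Prop :=
  (forall x, 0 < x -> ex_series (fun n => a (n + 2)%nat * x ^ n)) /\
  a 0%nat >= - / 4 /\
  ~ (a 0%nat = 0 /\ a 1%nat = 0) /\
  exists x0, 0 < x0 /\
    (
      ex_RInt_gen (fun t => Rabs (qfun a t)) (at_point x0) (Rbar_locally p_infty)
    \/ (* q' in L1(x0,oo), q AC_loc on [x0,oo) (automatic: q is analytic), q -> 0 *)
      (ex_RInt_gen (fun t => Rabs (Derive (qfun a) t)) (at_point x0)
                   (Rbar_locally p_infty)
       /\ is_lim (qfun a) p_infty 0)).

Definition appell_sol (q : R -> R) (lam : R) (P Q S : R -> R) : Prop :=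
  forall x, 0 < x ->
    is_derive P x ((lam - q x) * Q x) /\
    is_derive Q x (-2 * P x + 2 * (lam - q x) * S x) /\
    is_derive S x (- Q x).

Definition gammaf (R1 : R -> R) (c x : R) : R := RInt (fun t => / R1 t) c x.

Definition U2P (P1 Q1 R1 : R -> R) (c x : R) : R :=
  P1 x * cos (2 * gammaf R1 c x) + (Q1 x / R1 x) * sin (2 * gammaf R1 c x)
  - (2 / R1 x) * cos (2 * gammaf R1 c x).
Definition U2Q (P1 Q1 R1 : R -> R) (c x : R) : R :=
  Q1 x * cos (2 * gammaf R1 c x) + 2 * sin (2 * gammaf R1 c x).
Definition U2R (P1 Q1 R1 : R -> R) (c x : R) : R :=
  R1 x * cos (2 * gammaf R1 c x).

Definition U3P (P1 Q1 R1 : R -> R) (c x : R) : R :=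
  P1 x * sin (2 * gammaf R1 c x) - (Q1 x / R1 x) * cos (2 * gammaf R1 c x)
  - (2 / R1 x) * sin (2 * gammaf R1 c x).
Definition U3Q (P1 Q1 R1 : R -> R) (c x : R) : R :=
  Q1 x * sin (2 * gammaf R1 c x) - 2 * cos (2 * gammaf R1 c x).
Definition U3R (P1 Q1 R1 : R -> R) (c x : R) : R :=
  R1 x * sin (2 * gammaf R1 c x).

(** The Appell system carries the conserved bilinear form
    [B(U, V) = Q Q' - 2 (P S' + S P')]: its derivative along any two solutions
    vanishes identically.  Evaluating [B(U1, U1) = Q1^2 - 4 P1 R1] at infinity
    gives [-4], so [R1] never vanishes, [gamma' = 1/R1] and [P1 = (Q1^2 + 4)/(4 R1)];
    with these relations a direct differentiation shows that [U2] and [U3] solve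
    the system.  Moreover [U1, U2, U3] are [B]-orthogonal with
    [B(U1, U1) = -4] and [B(U2, U2) = B(U3, U3) = 4], so any triple is recovered
    from its [B]-products with them; for a solution [U] these products are
    constant, which yields the constant coefficients. *)
From Stdlib Require Import Reals Lra Nsatz.
From Coquelicot Require Import Coquelicot.
Open Scope R_scope.

Lemma is_derive_eq (f : R -> R) (x l l' : R) : is_derive f x l -> l = l' -> is_derive f x l'.
Proof. now intros H <-. Qed.

Lemma is_derive_cos_comp (g : R -> R) x l :
  is_derive g x l -> is_derive (fun t => cos (g t)) x (- sin (g x) * l).
Proof.
  intros Hg. eapply is_derive_eq.
  - exact (is_derive_comp cos g x _ _ (is_derive_cos (g x)) Hg).
  - apply Rmult_comm.
Qed.

Lemma is_derive_sin_comp (g : R -> R) x l :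
  is_derive g x l -> is_derive (fun t => sin (g t)) x (cos (g x) * l).
Proof.
  intros Hg. eapply is_derive_eq.
  - exact (is_derive_comp sin g x _ _ (is_derive_sin (g x)) Hg).
  - apply Rmult_comm.
Qed.

Ltac derive_rules :=
  repeat match goal with
  | |- is_derive (fun _ => ?k) _ _ => apply is_derive_const
  | |- is_derive (fun t => @?f t + @?g t) _ _ => apply (is_derive_plus f g)
  | |- is_derive (fun t => @?f t - @?g t) _ _ => apply (is_derive_minus f g)
  | |- is_derive (fun t => @?f t * @?g t) _ _ => apply (Derive.is_derive_mult f g)
  | |- is_derive (fun t => @?f t / @?g t) _ _ => apply (is_derive_div f g)
  | |- is_derive (fun t => cos (@?g t)) _ _ => apply (is_derive_cos_comp g)
  | |- is_derive (fun t => sin (@?g t)) _ _ => apply (is_derive_sin_comp g)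
  | |- is_derive _ _ _ => eassumption
  | |- _ <> 0 => assumption
  end.

Ltac is_derive_by_rules :=
  eapply is_derive_eq; [derive_rules | unfold minus, plus, opp, zero; simpl].

Lemma is_derive_0_const_pos (f : R -> R) :
  (forall x, 0 < x -> is_derive f x 0) -> forall x y, 0 < x -> 0 < y -> f x = f y.
Proof.
  intros Hf x y hx hy.
  assert (Hxy : forall z, Rmin x y <= z <= Rmax x y -> 0 < z).
  { intros z hz. assert (0 < Rmin x y) by (apply Rmin_glb_lt; lra). lra. }
  destruct (MVT_gen f x y (fun _ => 0)) as [z [_ Hz]].
  - intros z hz. apply Hf, Hxy. lra.
  - intros z hz. apply continuity_pt_filterlim.
    apply (ex_derive_continuous (K := R_AbsRing) (V := R_NormedModule)).
    exists 0. apply Hf, Hxy, hz.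
  - lra.
Qed.

Lemma const_pos_eq_is_lim (f : R -> R) (l : R) :
  (forall x y, 0 < x -> 0 < y -> f x = f y) -> is_lim f p_infty l ->
  forall x, 0 < x -> f x = l.
Proof.
  intros Hf Hl x hx.
  assert (Hx : is_lim f p_infty (f x)).
  { eapply is_lim_ext_loc; [| apply is_lim_const].
    exists 0. intros y hy. apply Hf; lra. }
  apply is_lim_unique in Hl, Hx. rewrite Hl in Hx. now injection Hx.
Qed.

Lemma is_derive_RInt_pos (f : R -> R) c :
  0 < c -> (forall x, 0 < x -> continuous f x) ->
  forall x, 0 < x -> is_derive (fun y => RInt f c y) x (f x).
Proof.
  intros hc Hf x hx. apply (is_derive_RInt f _ c x).
  - assert (hx2 : 0 < x / 2) by lra. exists (mkposreal _ hx2). intros y Hy.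
    change (Rabs (y - x) < x / 2) in Hy. apply Rabs_def2 in Hy.
    apply (RInt_correct (V := R_CompleteNormedModule)), ex_RInt_continuous.
    intros z hz. apply Hf. assert (0 < Rmin c y) by (apply Rmin_glb_lt; lra). lra.
  - now apply Hf.
Qed.

Definition appell_form (p q s p' q' s' : R) : R := q * q' - 2 * (p * s' + s * p').

Lemma appell_form_const q lam P Q S P' Q' S' :
  appell_sol q lam P Q S -> appell_sol q lam P' Q' S' ->
  forall x y, 0 < x -> 0 < y ->
    appell_form (P x) (Q x) (S x) (P' x) (Q' x) (S' x) =
    appell_form (P y) (Q y) (S y) (P' y) (Q' y) (S' y).
Proof.
  intros HU HV. apply is_derive_0_const_pos. intros x hx.
  destruct (HU x hx) as (? & ? & ?), (HV x hx) as (? & ? & ?).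
  unfold appell_form. is_derive_by_rules; ring.
Qed.

Section Solutions_from_U1.

Variables (q : R -> R) (lam c : R) (P1 Q1 R1 : R -> R).
Hypothesis U1_sol : appell_sol q lam P1 Q1 R1.
Hypothesis U1_form : forall x, 0 < x -> Q1 x * Q1 x - 4 * (P1 x * R1 x) = -4.
Hypothesis c_pos : 0 < c.

Lemma R1_neq0 x : 0 < x -> R1 x <> 0.
Proof. intros hx e. pose proof (U1_form x hx) as Hx. rewrite e in Hx. nra. Qed.

Lemma P1_eq x : 0 < x -> P1 x = (Q1 x * Q1 x + 4) / (4 * R1 x).
Proof.
  intros hx. pose proof (U1_form x hx). pose proof (R1_neq0 x hx).
  field_simplify_eq; [lra | assumption].
Qed.

Lemma is_derive_gammaf x : 0 < x -> is_derive (gammaf R1 c) x (/ R1 x).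
Proof.
  apply (is_derive_RInt_pos (fun t => / R1 t) c c_pos). intros z hz.
  apply (ex_derive_continuous (K := R_AbsRing) (V := R_NormedModule)).
  eexists. apply is_derive_inv; [apply (U1_sol z hz) | now apply R1_neq0].
Qed.

Ltac solve_rotated :=
  intros x hx; destruct (U1_sol x hx) as (? & ? & ?);
  pose proof (is_derive_gammaf x hx); pose proof (R1_neq0 x hx);
  pose proof (P1_eq x hx) as HP1; set (g := gammaf R1 c) in *; clearbody g;
  split; [|split]; (is_derive_by_rules; rewrite ?HP1; field; auto).

Lemma appell_sol_U2 :
  appell_sol q lam (U2P P1 Q1 R1 c) (U2Q P1 Q1 R1 c) (U2R P1 Q1 R1 c).
Proof. unfold U2P, U2Q, U2R. solve_rotated. Qed.

Lemma appell_sol_U3 :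
  appell_sol q lam (U3P P1 Q1 R1 c) (U3Q P1 Q1 R1 c) (U3R P1 Q1 R1 c).
Proof. unfold U3P, U3Q, U3R. solve_rotated. Qed.

(* The coefficients come from the Gram matrix diag(-4, 4, 4) of U1, U2, U3. *)
Lemma appell_expansion x p s r : 0 < x ->
  let b1 := - appell_form p s r (P1 x) (Q1 x) (R1 x) / 4 in
  let b2 := appell_form p s r (U2P P1 Q1 R1 c x) (U2Q P1 Q1 R1 c x) (U2R P1 Q1 R1 c x) / 4 in
  let b3 := appell_form p s r (U3P P1 Q1 R1 c x) (U3Q P1 Q1 R1 c x) (U3R P1 Q1 R1 c x) / 4 in
  p = b1 * P1 x + b2 * U2P P1 Q1 R1 c x + b3 * U3P P1 Q1 R1 c x /\
  s = b1 * Q1 x + b2 * U2Q P1 Q1 R1 c x + b3 * U3Q P1 Q1 R1 c x /\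
  r = b1 * R1 x + b2 * U2R P1 Q1 R1 c x + b3 * U3R P1 Q1 R1 c x.
Proof.
  intros hx. pose proof (R1_neq0 x hx).
  assert (cos (2 * gammaf R1 c x) ^ 2 + sin (2 * gammaf R1 c x) ^ 2 = 1).
  { rewrite <- (sin2_cos2 (2 * gammaf R1 c x)). unfold Rsqr. ring. }
  cbv zeta. unfold appell_form, U2P, U2Q, U2R, U3P, U3Q, U3R.
  rewrite (P1_eq x hx).
  split; [|split]; field_simplify_eq; auto; nsatz.
Qed.

End Solutions_from_U1.

Lemma appell_form_U1 q lam P1 Q1 R1 :
  0 < lam -> appell_sol q lam P1 Q1 R1 ->
  is_lim P1 p_infty (sqrt lam) -> is_lim Q1 p_infty 0 ->
  is_lim R1 p_infty (/ sqrt lam) ->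
  forall x, 0 < x -> Q1 x * Q1 x - 4 * (P1 x * R1 x) = -4.
Proof.
  intros hl HU LP LQ LR x hx.
  assert (hs : sqrt lam <> 0) by (apply Rgt_not_eq, sqrt_lt_R0, hl).
  replace (-4) with (0 * 0 - 4 * (sqrt lam * / sqrt lam)) by (field; exact hs).
  apply (const_pos_eq_is_lim (fun x => Q1 x * Q1 x - 4 * (P1 x * R1 x))); [| | exact hx].
  - intros y z hy hz. pose proof (appell_form_const _ _ _ _ _ _ _ _ HU HU y z hy hz) as E.
    unfold appell_form in E. lra.
  - apply (is_lim_minus _ _ _ (0 * 0) (4 * (sqrt lam * / sqrt lam))); try easy.
    + now apply (is_lim_mult _ _ _ 0 0).
    + apply (is_lim_scal_l (fun x => P1 x * R1 x) 4 p_infty (sqrt lam * / sqrt lam)).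
      now apply (is_lim_mult _ _ _ (sqrt lam) (/ sqrt lam)).
Qed.

Theorem lemma2 (a : nat -> R) (lam c : R) (P1 Q1 R1 : R -> R) :
  q_hyp a -> 0 < lam -> 0 < c ->
  appell_sol (qfun a) lam P1 Q1 R1 ->
  is_lim P1 p_infty (sqrt lam) ->
  is_lim Q1 p_infty 0 ->
  is_lim R1 p_infty (/ sqrt lam) ->
  appell_sol (qfun a) lam (U2P P1 Q1 R1 c) (U2Q P1 Q1 R1 c) (U2R P1 Q1 R1 c) /\
  appell_sol (qfun a) lam (U3P P1 Q1 R1 c) (U3Q P1 Q1 R1 c) (U3R P1 Q1 R1 c) /\
  (forall P Q S : R -> R, appell_sol (qfun a) lam P Q S ->
    exists b1 b2 b3 : R, forall x, 0 < x ->
      P x = b1 * P1 x + b2 * U2P P1 Q1 R1 c x + b3 * U3P P1 Q1 R1 c x /\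
      Q x = b1 * Q1 x + b2 * U2Q P1 Q1 R1 c x + b3 * U3Q P1 Q1 R1 c x /\
      S x = b1 * R1 x + b2 * U2R P1 Q1 R1 c x + b3 * U3R P1 Q1 R1 c x).
Proof.
  intros _ hl hc HU1 LP LQ LR.
  pose proof (appell_form_U1 _ _ _ _ _ hl HU1 LP LQ LR) as HF.
  pose proof (appell_sol_U2 _ _ _ _ _ _ HU1 HF hc) as HU2.
  pose proof (appell_sol_U3 _ _ _ _ _ _ HU1 HF hc) as HU3.
  split; [exact HU2 | split; [exact HU3 |]].
  intros P Q S HU.
  exists (- appell_form (P c) (Q c) (S c) (P1 c) (Q1 c) (R1 c) / 4),
    (appell_form (P c) (Q c) (S c)
       (U2P P1 Q1 R1 c c) (U2Q P1 Q1 R1 c c) (U2R P1 Q1 R1 c c) / 4),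
    (appell_form (P c) (Q c) (S c)
       (U3P P1 Q1 R1 c c) (U3Q P1 Q1 R1 c c) (U3R P1 Q1 R1 c c) / 4).
  intros x hx.
  rewrite <- (appell_form_const _ _ _ _ _ _ _ _ HU HU1 x c hx hc),
    <- (appell_form_const _ _ _ _ _ _ _ _ HU HU2 x c hx hc),
    <- (appell_form_const _ _ _ _ _ _ _ _ HU HU3 x c hx hc).
  exact (appell_expansion c P1 Q1 R1 HF x (P x) (Q x) (S x) hx).
Qed.
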